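(* Fix $q\in[0,1)$. Let $F_n=\max\{I_1,\dots,I_n\}-n$, where $(I_i)_{i\ge1}$ comes from the infinite Bernoulli model. Then for any sequence $(a_n)_{n\ge1}$ of positive reals with $a_n/\log n\to\infty$, we have $F_n/a_n\to0$ almost surely. In particular $F_n/n\to0$ almost surely.
   Context: Infinite Bernoulli model: $(B_{i,j})_{i,j\ge1}$ are independent Bernoulli$(1-q)$ random variables and $I_i=\min\{j\notin\{I_1,\dots,I_{i-1}\}:B_{i,j}=1\}$ for $i\ge1$. *)

From HB Require Import structures.
From mathcomp Require Import all_boot all_order all_algebra.
From mathcomp Require Import all_classical all_reals all_analysis.
Set Implicit Arguments. Unset Strict Implicit. Unset Printing Implicit Defensive.
Import Order.TTheory GRing.Theory Num.Theory.
Local Open Scope classical_set_scope.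
Local Open Scope ring_scope.

Definition mutually_independent_bool {R : realType} {d : measure_display}
  {T : measurableType d} (P : probability T R) {I : eqType}
  (X : I -> T -> bool) : Prop :=
  forall (s : seq I) (b : I -> bool), uniq s ->
    P (\bigcap_(k in [set k | k \in s]) [set w | X k w = b k]) =
    (\prod_(k <- s) P [set w | X k w = b k])%E.

(* Infinite Bernoulli model (1-based indices; B i j for i, j >= 1 matter).
   next_index B w i prev = min { j >= 1 : j \notin prev, B i j w = true },
   with the (probability-zero) convention 0 if no such j exists. *)
Definition next_index {T : Type} (B : nat -> nat -> T -> bool) (w : T)
  (i : nat) (prev : seq nat) : nat :=
  match pselect (exists j : nat, [&& (0 < j)%N, j \notin prev & B i j w]) with
  | left h => ex_minn h
  | right _ => 0
  end.

(* Iseq B w n = [:: I_1; ...; I_n] evaluated at outcome w. *)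
Fixpoint Iseq {T : Type} (B : nat -> nat -> T -> bool) (w : T) (n : nat)
  : seq nat :=
  match n with
  | 0 => [::]
  | m.+1 => rcons (Iseq B w m) (next_index B w m.+1 (Iseq B w m))
  end.

Definition Ivar {T : Type} (B : nat -> nat -> T -> bool) (i : nat) (w : T) : nat :=
  nth 0 (Iseq B w i) i.-1.

Definition Fvar {R : realType} {T : Type} (B : nat -> nat -> T -> bool)
  (n : nat) (w : T) : R :=
  ((\max_(i <- Iseq B w n) i)%N)%:R - n%:R.

From HB Require Import structures.
From mathcomp Require Import all_boot all_order all_algebra.
From mathcomp Require Import all_classical all_reals all_analysis.
From mathcomp Require Import ring lra zify.
From Stdlib Require Import Lia.
Import Order.TTheory GRing.Theory Num.Theory.
Set Implicit Arguments. Unset Strict Implicit. Unset Printing Implicit Defensive.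
Local Open Scope classical_set_scope.
Local Open Scope ring_scope.

(* Given the history [I_1; ...; I_m], which consists of m distinct positive
   integers, the event I_(m+1) > m + k forces B_(m+1,j) = 0 for the at least k
   unused columns j <= m + k; these entries are independent of the ones that
   determine the history, so P(I_(m+1) > m + k) <= q^k.  As F_n > k forces
   I_(m+1) > m + k for some m < n, a union bound gives P(F_n > k) <= n q^k.  For
   k = floor(eps a_n) and a_n / ln n -> +oo this is eventually at most
   1/((n+1)(n+2)), so by Borel-Cantelli F_n <= eps a_n eventually, almost
   surely; F_n >= 0 because the I_i are distinct and positive. *)

Section NextIndex.
Variables (T : Type) (B : nat -> nat -> T -> bool) (w : T).
Local Open Scope nat_scope.

Lemma next_index_gt0_spec i prev : 0 < next_index B w i prev ->
  [/\ next_index B w i prev \notin prev, B i (next_index B w i prev) w &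
     forall j, 0 < j < next_index B w i prev -> j \notin prev -> ~~ B i j w].
Proof.
rewrite /next_index; case: pselect => [h|_]; last by [].
case: ex_minnP => x /and3P[x0 xp Bx] xmin _; split => // j /andP[j0 jx] jp.
by apply/negP => Bj; have := xmin j; rewrite j0 jp Bj leqNgt jx => /(_ isT).
Qed.

Lemma next_index_eq i prev x :
  0 < x -> x \notin prev -> B i x w ->
  (forall j, 0 < j < x -> j \notin prev -> ~~ B i j w) ->
  next_index B w i prev = x.
Proof.
move=> x0 xp Bx xmin; rewrite /next_index; case: pselect => [h|nh]; last first.
  by exfalso; apply: nh; exists x; rewrite x0 xp Bx.
case: ex_minnP => y /and3P[y0 yp By] ymin.
apply/eqP; rewrite eqn_leq ymin ?x0 ?xp ?Bx //= leqNgt; apply/negP => yx.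
by have := xmin y; rewrite y0 yx yp By => /(_ isT isT).
Qed.

(* Off this almost sure event [next_index] may take its junk value 0. *)
Definition unbounded_rows : Prop := forall i M, exists2 j, M < j & B i j w.

Lemma next_index_gt0 i prev : unbounded_rows -> 0 < next_index B w i prev.
Proof.
move=> unb; rewrite /next_index; case: pselect => [e|ne]; last first.
  have [j Mj Bj] := unb i (\max_(x <- prev) x); case: ne; exists j.
  rewrite Bj andbT (leq_ltn_trans _ Mj) //=; apply: contraTN Mj => jp.
  by rewrite -leqNgt (leq_bigmax_seq _ jp).
by case: ex_minnP => x /and3P[].
Qed.

Lemma size_Iseq m : size (Iseq B w m) = m.
Proof. by elim: m => //= m IH; rewrite size_rcons IH. Qed.

Lemma take_Iseq m r : r <= m -> take r (Iseq B w m) = Iseq B w r.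
Proof.
elim: m => [|m IH]; first by rewrite leqn0 => /eqP ->.
rewrite leq_eqVlt => /orP[/eqP ->|]; first by rewrite take_oversize ?size_Iseq.
by rewrite ltnS => rm /=; rewrite -cats1 takel_cat ?IH ?size_Iseq.
Qed.

Lemma nth_Iseq m r : r < m ->
  nth 0 (Iseq B w m) r = next_index B w r.+1 (Iseq B w r).
Proof.
move=> rm; rewrite -(nth_take 0 (ltnSn r)) (take_Iseq rm) /=.
by rewrite nth_rcons size_Iseq ltnn eqxx.
Qed.

Lemma Iseq_eqP S : Iseq B w (size S) = S <->
  forall r, r < size S -> next_index B w r.+1 (take r S) = nth 0 S r.
Proof.
split=> [IS r rS|]; first by rewrite -IS take_Iseq ?nth_Iseq // ltnW.
elim/last_ind: S => [//|S x IH]; rewrite size_rcons => h /=.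
have IS : Iseq B w (size S) = S.
  apply: IH => r rS; have := h r (ltn_trans rS (ltnSn _)).
  by rewrite -cats1 takel_cat ?nth_cat ?rS // ltnW.
have := h (size S) (leqnn _).
by rewrite -cats1 take_size_cat // nth_cat ltnn subnn IS => /= ->; rewrite cats1.
Qed.

Lemma Iseq_uniq_gt0 m : unbounded_rows -> uniq (Iseq B w m) && (0 \notin Iseq B w m).
Proof.
move=> unb; elim: m => [//|m /andP[u p]] /=.
have pos := next_index_gt0 m.+1 (Iseq B w m) unb.
have [nS _ _] := next_index_gt0_spec pos.
by rewrite rcons_uniq nS u mem_rcons in_cons negb_or p andbT eq_sym -lt0n pos.
Qed.

Lemma Iseq_max_ge m : unbounded_rows -> m <= \max_(i <- Iseq B w m) i.
Proof.
move=> /(Iseq_uniq_gt0 m) /andP[u p].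
rewrite -{1}(size_Iseq m) -[X in _ <= X](size_iota 1).
apply: uniq_leq_size => // x xI; rewrite mem_iota add1n ltnS lt0n.
by rewrite (memPn p) ?(leq_bigmax_seq _ xI).
Qed.

Lemma Iseq_max_le n k :
  (forall m, m < n -> next_index B w m.+1 (Iseq B w m) <= k + m) ->
  \max_(i <- Iseq B w n) i <= k + n.
Proof.
move=> h; apply/bigmax_leqP_seq => x /(nthP 0) [r].
rewrite size_Iseq => rn <- _; rewrite nth_Iseq //.
by apply: leq_trans (h r rn) _; rewrite leq_add2l ltnW.
Qed.

End NextIndex.

Section Cylinder.
Variables (T : Type) (I : eqType) (X : I -> T -> bool).

Definition cylinder (s : seq I) (b : I -> bool) : set T :=
  \bigcap_(k in [set k | k \in s]) [set w | X k w = b k].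

Lemma cylinderP s b w : cylinder s b w <-> forall k, k \in s -> X k w = b k.
Proof. by []. Qed.

Lemma cylinder_undup s b : cylinder (undup s) b = cylinder s b.
Proof.
by apply/seteqP; split=> w /cylinderP h; apply/cylinderP => k ks; apply: h;
  rewrite ?mem_undup in ks *.
Qed.

Lemma eq_in_cylinder s b b' : {in s, b =1 b'} -> cylinder s b = cylinder s b'.
Proof.
by move=> bb'; apply/seteqP; split=> w /cylinderP h; apply/cylinderP => k ks;
  rewrite h ?bb'.
Qed.

Lemma cylinderI s1 s2 b1 b2 : {in s2, forall k, k \notin s1} ->
  cylinder s1 b1 `&` cylinder s2 b2 =
  cylinder (s1 ++ s2) (fun k => if k \in s1 then b1 k else b2 k).
Proof.
move=> dis; apply/seteqP; split=> w /=.
  move=> [/cylinderP h1 /cylinderP h2]; apply/cylinderP => k; rewrite mem_cat.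
  by case: ifP => [ks1 _|_ /= ks2]; [exact: h1|exact: h2].
move=> /cylinderP h; split; apply/cylinderP => k ks; rewrite h ?mem_cat ?ks ?orbT //.
by rewrite (negPf (dis k ks)).
Qed.

End Cylinder.

Section CylinderProbability.
Context {R : realType} {d : measure_display} {T : measurableType d}
  (P : probability T R) {I : eqType} (X : I -> T -> bool).
Hypothesis measX : forall k, measurable [set w | X k w].
Hypothesis indepX : mutually_independent_bool P X.

Lemma measurable_eqb k b : measurable [set w | X k w = b].
Proof.
case: b; first by rewrite (_ : [set w | _] = [set w | X k w]) //; apply/seteqP.
rewrite (_ : [set w | _] = ~` [set w | X k w]); first exact: measurableC.
by apply/seteqP; split=> w /=; case: (X k w).
Qed.

Lemma measurable_cylinder s b : measurable (cylinder X s b).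
Proof.
elim: s => [|k s IH].
  by rewrite (_ : cylinder _ _ _ = setT) //; apply/seteqP; split.
rewrite (_ : cylinder _ _ _ = [set w | X k w = b k] `&` cylinder X s b).
  exact: measurableI (measurable_eqb k (b k)) IH.
apply/seteqP; split=> w.
  move=> /cylinderP h; split=> /=; first by rewrite h ?mem_head.
  by apply/cylinderP => j js; rewrite h // inE js orbT.
by move=> [/= h1 /cylinderP h2]; apply/cylinderP => j; rewrite inE => /orP[/eqP ->|/h2].
Qed.

Lemma probability_cylinderI s1 s2 b1 b2 : {in s2, forall k, k \notin s1} ->
  P (cylinder X s1 b1 `&` cylinder X s2 b2) =
  (P (cylinder X s1 b1) * P (cylinder X s2 b2))%E.
Proof.
move=> dis; set b := fun k => if k \in s1 then b1 k else b2 k.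
have -> : cylinder X s1 b1 = cylinder X (undup s1) b.
  by rewrite cylinder_undup; apply: eq_in_cylinder => k ks; rewrite /b /= ks.
have -> : cylinder X s2 b2 = cylinder X (undup s2) b.
  rewrite cylinder_undup; apply: eq_in_cylinder => k ks; rewrite /b /=.
  by rewrite (negPf (dis k ks)).
have dis' : {in undup s2, forall k, k \notin undup s1}.
  by move=> k; rewrite !mem_undup; exact: dis.
have u12 : uniq (undup s1 ++ undup s2).
  by rewrite cat_uniq !undup_uniq andbT; apply/hasPn.
rewrite cylinderI // (@eq_in_cylinder _ _ _ _ _ b) => [|k _]; last by case: ifP.
by rewrite !indepX ?undup_uniq // big_cat.
Qed.

Lemma probability_cylinder_const s b p : uniq s ->
  (forall k, P [set w | X k w = b] = p%:E) ->
  P (cylinder X s (fun=> b)) = (p ^+ size s)%:E.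
Proof.
move=> us pb; rewrite indepX //; elim: s us => [|k s IH] /=; first by rewrite big_nil.
by move=> /andP[_ us]; rewrite big_cons pb IH // -EFinM exprS.
Qed.

End CylinderProbability.

Local Notation entries B := (fun c : nat * nat => B c.1 c.2).

Lemma nth_notin_take (U : eqType) (x0 : U) (s : seq U) r :
  uniq s -> (r < size s)%N -> nth x0 s r \notin take r s.
Proof.
move=> + rs; rewrite -{1}(cat_take_drop r s) (drop_nth x0 rs) cat_uniq.
by case/and3P=> _ /hasPn + _; apply; rewrite mem_head.
Qed.

Section History.
Variables (T : Type) (B : nat -> nat -> T -> bool).
Local Open Scope nat_scope.

Definition history_valid (S : seq nat) : bool := uniq S && (0 \notin S).

Definition history_coords (S : seq nat) : seq (nat * nat) :=
  [seq (r.+1, j) | r <- iota 0 (size S),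
                   j <- [seq j <- iota 1 (nth 0 S r) | j \notin take r S]].

Definition history_bits (S : seq nat) (c : nat * nat) : bool :=
  c.2 == nth 0 S c.1.-1.

Lemma mem_history_coords S r j : r < size S -> 0 < j <= nth 0 S r ->
  j \notin take r S -> (r.+1, j) \in history_coords S.
Proof.
move=> rS jr jS; apply/allpairsPdep; exists r, j.
by rewrite mem_iota rS mem_filter jS mem_iota add1n ltnS.
Qed.

Lemma Iseq_eq_cylinder w S : history_valid S ->
  Iseq B w (size S) = S <->
  cylinder (entries B) (history_coords S) (history_bits S) w.
Proof.
case/andP=> uS S0.
have S_gt0 r : r < size S -> 0 < nth 0 S r.
  by move=> rS; rewrite lt0n; apply: contraNneq S0 => <-; exact: mem_nth.
rewrite Iseq_eqP; split=> [h|/cylinderP h r rS].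
  apply/cylinderP => ? /allpairsPdep[r [j [+ + ->]]].
  rewrite mem_iota add0n => /andP[_ rS].
  rewrite mem_filter mem_iota add1n ltnS => /andP[jS /andP[j0 jx]] /=.
  have [] := @next_index_gt0_spec _ B w r.+1 (take r S); first by rewrite h ?S_gt0.
  rewrite h // => _ Bx hmin; rewrite /history_bits /=.
  have [->|jnx] := eqVneq j (nth 0 S r); first by rewrite Bx.
  by apply/negbTE/hmin => //; rewrite j0 ltn_neqAle jnx jx.
have Bbit j : 0 < j <= nth 0 S r -> j \notin take r S ->
    B r.+1 j w = (j == nth 0 S r).
  by move=> jr jS; rewrite (h _ (mem_history_coords rS jr jS)).
have xS := nth_notin_take 0 uS rS.
apply: next_index_eq; rewrite ?S_gt0 //; first by rewrite Bbit ?S_gt0 ?leqnn.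
by move=> j /andP[j0 jx] jS; rewrite Bbit ?j0 ?(ltnW jx) ?(ltn_eqF jx).
Qed.

Definition history_event (m : nat) (S : seq nat) : set T :=
  [set w | history_valid S /\ Iseq B w m = S].

Lemma history_event_cylinder S : history_valid S ->
  history_event (size S) S =
  cylinder (entries B) (history_coords S) (history_bits S).
Proof.
move=> vS; apply/seteqP; split=> w; first by case=> _ /(Iseq_eq_cylinder w vS).
by move=> /(Iseq_eq_cylinder w vS).
Qed.

Lemma history_event0 m S : ~~ ((size S == m) && history_valid S) ->
  history_event m S = set0.
Proof.
move=> nvS; apply/seteqP; split=> // w [vS IS]; move: nvS.
by rewrite vS andbT -IS size_Iseq eqxx.
Qed.

Definition gap_coords (m k : nat) (S : seq nat) : seq (nat * nat) :=
  [seq (m.+1, j) | j <- iota 1 (k + m) & j \notin S].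

Definition overshoot_given (m k : nat) (S : seq nat) : set T :=
  history_event m S `&` cylinder (entries B) (gap_coords m k S) (fun=> false).

(* Up to the null set where some row of B is eventually 0, this is the event
   k + m < I_(m+1), split by the value of the history [I_1; ...; I_m]; the
   histories are enumerated through [pickle_inv] to make the union countable. *)
Definition overshoot (m k : nat) : set T :=
  \bigcup_n oapp (overshoot_given m k) set0 (@pickle_inv (seq nat) n).

Lemma overshootP w m k : unbounded_rows B w ->
  k + m < next_index B w m.+1 (Iseq B w m) -> overshoot m k w.
Proof.
move=> unb lt; exists (pickle (Iseq B w m)) => //; rewrite pickleK_inv /=.
split; first by split; [exact: Iseq_uniq_gt0|].
apply/cylinderP => ? /mapP[j]; rewrite mem_filter mem_iota add1n ltnS.
move=> /andP[jS /andP[j0 jk]] -> /=.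
have [_ _ hmin] := next_index_gt0_spec (next_index_gt0 m.+1 (Iseq B w m) unb).
by apply/negbTE/hmin => //; rewrite j0 (leq_ltn_trans jk lt).
Qed.

End History.

Section FvarBounds.
Context {R : realType} {T : Type} {B : nat -> nat -> T -> bool} {w : T}.
Hypothesis unb : unbounded_rows B w.

Lemma Fvar_ge0 n : 0 <= Fvar (R:=R) B n w.
Proof. by rewrite /Fvar subr_ge0 ler_nat Iseq_max_ge. Qed.

Lemma Fvar_le n k :
  ~ (\big[setU/set0]_(m < n) overshoot B m k) w -> Fvar (R:=R) B n w <= k%:R.
Proof.
move=> notover; rewrite /Fvar lerBlDr -natrD ler_nat Iseq_max_le // => m mn.
rewrite leqNgt; apply: contra_notN notover => lt.
by rewrite -(bigcup_mkord n (overshoot B ^~ k)); exists m => //; exact: overshootP.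
Qed.

End FvarBounds.

Lemma le_expr_eq0 (R : realType) (q : R) (x : \bar R) : 0 <= q -> q < 1 ->
  (0 <= x)%E -> (forall K, x <= (q ^+ K)%:E)%E -> x = 0%E.
Proof.
move=> q0 q1 x0 xq; apply/eqP; rewrite eq_le x0 andbT.
apply/lee_addgt0Pr => e e0; rewrite add0e.
have /cvgrPdist_lt /(_ e e0) [K _ qK] : (q ^+ K) @[K --> \oo] --> 0.
  by apply: cvg_expr; rewrite ger0_norm.
apply: le_trans (xq K) _; rewrite lee_fin ltW //.
by have := qK K (leqnn K); rewrite sub0r normrN ger0_norm ?exprn_ge0.
Qed.

Lemma nneseries_inv_lty (R : realType) (u : (\bar R)^nat) :
  (forall n, 0 <= u n)%E -> (forall n, u n <= (((n.+1 * n.+2)%:R)^-1)%:E)%E ->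
  (\sum_(n <oo) u n < +oo)%E.
Proof.
move=> u0 uinv; apply: (@le_lt_trans _ _ 1%E); last by rewrite ltry.
apply: lime_le; first by apply: is_cvg_nneseries => n _ _.
apply: nearW => K /=; apply: le_trans.
  by apply: (@lee_sum _ _ _ (fun n => (((n.+1 * n.+2)%:R)^-1)%:E)) => n _.
rewrite sumEFin lee_fin.
suff -> : \sum_(0 <= n < K) ((n.+1 * n.+2)%:R)^-1 = 1 - (K.+1%:R)^-1 :> R.
  by rewrite lerBlDr lerDl invr_ge0.
elim: K => [|K IH]; first by rewrite big_nil invr1 subrr.
rewrite big_nat_recr //= IH natrM; field.
by have := ler0n R K => K0; apply/andP; split; apply: lt0r_neq0; lra.
Qed.

Section BorelCantelli.
Context {R : realType} {d : measure_display} {T : measurableType d}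
  (mu : {measure set T -> \bar R}).

Lemma ae_eventually_notin (A : (set T)^nat) : (forall n, measurable (A n)) ->
  (\sum_(n <oo) mu (A n) < +oo)%E -> {ae mu, forall w, \forall n \near \oo, ~ A n w}.
Proof.
move=> mA sumA; exists (lim_sup_set A); split.
- by apply: bigcap_measurable => // j _; apply: bigcup_measurable.
- exact: lim_sup_set_cvg0.
move=> w /= notev j _; apply: contrapT => notA; apply: notev.
by exists j => // n /= jn An; apply: notA; exists n.
Qed.

Lemma ae_eventually_notin_inv (A : (set T)^nat) : (forall n, measurable (A n)) ->
  (\forall n \near \oo, mu (A n) <= (((n.+1 * n.+2)%:R)^-1)%:E)%E ->
  {ae mu, forall w, \forall n \near \oo, ~ A n w}.
Proof.
move=> mA [N _ AN]; pose A' n := if (N <= n)%N then A n else set0.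
have mA' n : measurable (A' n) by rewrite /A'; case: ifP.
have A'inv n : (mu (A' n) <= (((n.+1 * n.+2)%:R)^-1)%:E)%E.
  by rewrite /A'; case: ifPn => [|_]; [exact: AN|rewrite measure0 lee_fin].
have sumA' := nneseries_inv_lty (fun n => measure_ge0 mu (A' n)) A'inv.
apply: filterS (ae_eventually_notin mA' sumA').
move=> w ev; near=> n.
have Nn : (N <= n)%N by near: n; exact: nbhs_infty_ge.
have : ~ A' n w by near: n; exact: ev.
by rewrite /A' Nn.
Unshelve. all: by end_near.
Qed.

End BorelCantelli.

Lemma expr_le_invX4 (R : realType) (r : R) (n k : nat) : 0 < r -> (0 < n)%N ->
  4 * ln n%:R <= k%:R * - ln r -> r ^+ k <= (n%:R ^+ 4)^-1.
Proof.
move=> r0 n0 kr; rewrite -(lnK (x := r)) ?posrE // -expRM_natl.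
rewrite -(lnK (x := n%:R)) ?posrE ?ltr0n // -expRM_natl -expRN ler_expR.
by rewrite lerNr -mulrN.
Qed.

Lemma natr_divX4_le (R : realType) n : (3 <= n)%N ->
  n%:R / n%:R ^+ 4 <= ((n.+1 * n.+2)%:R)^-1 :> R.
Proof.
move=> n3; have n0 : 0 < n%:R :> R by rewrite ltr0n; lia.
rewrite exprS invfM mulrA divff ?lt0r_neq0 // mul1r -natrX.
rewrite lef_pV2 ?posrE ?ltr0n ?expn_gt0 ?muln_gt0 ?ler_nat //; first nia.
lia.
Qed.

Lemma eventually_geometric_le (R : realType) (a : nat -> R) (q eps : R) :
  0 <= q -> q < 1 -> 0 < eps ->
  (fun n => a n / ln n%:R) @ \oo --> +oo ->
  \forall n \near \oo,
    n%:R * q ^+ Num.truncn (eps * a n) <= ((n.+1 * n.+2)%:R)^-1.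
Proof.
move=> q0 q1 e0 /cvgryPge ha.
(* q may be 0, so the logarithm is taken of some r in (q, 1) instead. *)
pose r := (1 + q) / 2; have r0 : 0 < r by rewrite /r; lra.
have L0 : 0 < - ln r by rewrite oppr_gt0 ln_lt0 // r0 /r; lra.
pose c := 4 / - ln r; have c0 : 0 < c by rewrite divr_gt0.
near=> n.
have n3 : (3 <= n)%N by near: n; exact: nbhs_infty_ge.
have an : (c + 1) / eps <= a n / ln n%:R by near: n; exact: ha.
have ln1 : 1 <= ln n%:R :> R.
  rewrite -[X in X <= _](expRK 1) ler_ln ?posrE ?expR_gt0 ?ltr0n //; last lia.
  apply: le_trans (ltW (truncnS_gt _)) _; rewrite ler_nat.
  by near: n; exact: nbhs_infty_ge.
have {}an : (c + 1) * ln n%:R <= eps * a n.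
  move: an; rewrite ler_pdivlMr ?(lt_le_trans ltr01 ln1) //.
  by rewrite mulrAC ler_pdivrMr // (mulrC (a n)).
set k := Num.truncn (eps * a n).
have kc : c * ln n%:R <= k%:R.
  have := truncnS_gt (eps * a n); rewrite -/k -natr1 mulrDl mul1r in an *; lra.
have rk : r ^+ k <= (n%:R ^+ 4)^-1.
  apply: expr_le_invX4 => //; first lia.
  by apply: le_trans (ler_wpM2r (ltW L0) kc); rewrite /c mulrAC divfK ?lt0r_neq0.
apply: le_trans (natr_divX4_le R n3); rewrite ler_wpM2l //.
by apply: le_trans rk; apply: lerXn2r; rewrite ?nnegrE ?(ltW r0) // /r; lra.
Unshelve. all: by end_near.
Qed.

Lemma cvg_div_to0 (R : realType) (f a : nat -> R) :
  (forall n, 0 <= f n) -> (forall n, (0 < n)%N -> 0 < a n) ->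
  (forall p : nat, \forall n \near \oo, f n <= p.+1%:R^-1 * a n) ->
  (fun n => f n / a n) @ \oo --> 0.
Proof.
move=> f0 a0 fa; apply/cvgrPdist_le => e e0.
have [p pe] : exists p : nat, p.+1%:R^-1 <= e.
  exists (Num.truncn e^-1); rewrite -[leRHS]invrK lef_pV2 ?posrE ?invr_gt0 //.
  exact/ltW/truncnS_gt.
near=> n.
have fn : f n <= p.+1%:R^-1 * a n by near: n; exact: fa.
have an : 0 < a n by apply: a0; near: n; exact: nbhs_infty_gt.
rewrite sub0r normrN ger0_norm ?divr_ge0 ?(ltW an) // ler_pdivrMr //.
by apply: le_trans fn _; rewrite ler_wpM2r ?(ltW an).
Unshelve. all: by end_near.
Qed.

Lemma cvgy_n_over_ln (R : realType) :
  (fun n : nat => n%:R / ln (n%:R : R)) @ \oo --> +oo.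
Proof.
apply/cvgryPge => M; near=> n.
have n3 : (3 <= n)%N by near: n; exact: nbhs_infty_ge.
have nM : (2 * M) ^+ 2 < n%:R.
  apply: lt_le_trans (truncnS_gt _) _; rewrite ler_nat.
  by near: n; exact: nbhs_infty_ge.
set s := Num.sqrt (n%:R : R).
have s0 : 0 < s by rewrite sqrtr_gt0 ltr0n; lia.
have ns : n%:R = s ^+ 2 :> R by rewrite sqr_sqrtr // ler0n.
have ln0 : 0 < ln (n%:R : R) by rewrite ln_gt0 // ltr1n; lia.
have lns : ln (n%:R : R) <= 2 * s.
  by rewrite ns lnXn // mulr_natl mulr2n ltW // ltrD // ln_sublinear.
have Ms : 2 * M <= s.
  by apply: le_trans (ler_norm _) _; rewrite -sqrtr_sqr /s ler_sqrt // ltW.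
rewrite ler_pdivlMr //; have [M0|M0] := leP M 0.
  by apply: le_trans (ler_wnM2l _ _) _; [exact: M0|exact: ltW ln0|rewrite mulr0].
apply: le_trans (ler_wpM2l (ltW M0) lns) _.
by rewrite ns mulrA (mulrC M) expr2 ler_wpM2r // ltW.
Unshelve. all: by end_near.
Qed.

Section BernoulliModel.
Context {R : realType} {d : measure_display} {T : measurableType d}
  (P : probability T R) (q : R) (B : nat -> nat -> T -> bool).
Hypothesis q_ge0 : 0 <= q.
Hypothesis q_lt1 : q < 1.
Hypothesis measB : forall i j, measurable [set w | B i j w].
Hypothesis probB : forall i j, P [set w | B i j w] = (1 - q)%:E.
Hypothesis indepB : mutually_independent_bool P (entries B).

Let measE (c : nat * nat) : measurable [set w | B c.1 c.2 w] := measB c.1 c.2.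

Lemma probability_entry_false (c : nat * nat) : P [set w | B c.1 c.2 w = false] = q%:E.
Proof.
rewrite (_ : [set w | _] = ~` [set w | B c.1 c.2 w]).
  by rewrite probability_setC // probB -EFinB opprB addrC subrK.
by apply/seteqP; split=> w /=; case: (B c.1 c.2 w).
Qed.

Lemma ae_unbounded_rows : {ae P, forall w, unbounded_rows B w}.
Proof.
apply: ae_foralln => i; apply: ae_foralln => M.
pose A := \bigcap_(j in [set j | (M < j)%N]) [set w | B i j w = false].
have mA : measurable A.
  by apply: bigcap_measurableType => j _; exact: measurable_eqb measE (i, j) false.
exists A; split => //; last first.
  by move=> w /= nex j Mj; apply/negbTE/negP => Bj; apply: nex; exists j.
apply: le_expr_eq0 q_ge0 q_lt1 (measure_ge0 P A) _ => K.
pose s := [seq (i, j) | j <- iota M.+1 K].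
have us : uniq s by rewrite map_inj_uniq ?iota_uniq // => j j' [].
have <- : size s = K by rewrite size_map size_iota.
rewrite -(probability_cylinder_const indepB us probability_entry_false).
apply: le_measure; rewrite ?inE //; first exact: measurable_cylinder.
move=> w Aw; apply/cylinderP => ? /mapP[j]; rewrite mem_iota => /andP[Mj _] -> /=.
exact: Aw.
Qed.

Lemma measurable_history_event m S : measurable (history_event B m S).
Proof.
have [/andP[/eqP <- vS]|] := boolP ((size S == m) && history_valid S).
  by rewrite history_event_cylinder //; exact: measurable_cylinder.
by move/history_event0 ->.
Qed.

Lemma measurable_overshoot_given m k S : measurable (overshoot_given B m k S).
Proof.
exact: measurableI (measurable_history_event m S) (measurable_cylinder measE _ _).
Qed.

Lemma measurable_overshoot m k : measurable (overshoot B m k).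
Proof.
apply: bigcupT_measurable => n; case: pickle_inv => [S|] /=; last exact: measurable0.
exact: measurable_overshoot_given.
Qed.

Lemma trivIset_history_event m :
  trivIset setT (fun n => oapp (history_event B m) set0 (@pickle_inv (seq nat) n)).
Proof.
move=> i j _ _ [w []].
case: (pickle_inv i) (@pickle_invK (seq nat) i) => [Si|//] /= <- [_ <-].
by case: (pickle_inv j) (@pickle_invK (seq nat) j) => [Sj|//] /= <- [_ <-].
Qed.

Lemma size_gap_coords m k S : size S = m -> (k <= size (gap_coords m k S))%N.
Proof.
move=> Sm; rewrite size_map size_filter.
have := count_predC (mem S) (iota 1 (k + m)); rewrite size_iota.
set inS := count (mem S) _; set notinS := count (predC _) _.
have : (inS <= m)%N.
  rewrite /inS -size_filter -Sm; apply: uniq_leq_size.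
    exact/filter_uniq/iota_uniq.
  by move=> j; rewrite mem_filter => /andP[].
lia.
Qed.

Lemma probability_overshoot_given m k S :
  (P (overshoot_given B m k S) <= (q ^+ k)%:E * P (history_event B m S))%E.
Proof.
rewrite /overshoot_given.
have [/andP[/eqP <- vS]|/history_event0 ->] := boolP ((size S == m) && history_valid S);
  last by rewrite set0I !measure0 mule0.
have ug : uniq (gap_coords (size S) k S).
  by rewrite map_inj_uniq ?filter_uniq ?iota_uniq // => j j' [].
rewrite history_event_cylinder // probability_cylinderI //; last first.
  move=> _ /mapP[j _ ->]; apply/negP => /allpairsPdep[r [j' [+ _ [e _]]]].
  by rewrite mem_iota e ltnn andbF.
rewrite (probability_cylinder_const indepB ug probability_entry_false) muleC.
by rewrite lee_wpmul2r ?measure_ge0 // lee_fin ler_wiXn2l ?size_gap_coords // ltW.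
Qed.

Lemma probability_overshoot m k : (P (overshoot B m k) <= (q ^+ k)%:E)%E.
Proof.
pose H n := oapp (history_event B m) set0 (@pickle_inv (seq nat) n).
pose G n := oapp (overshoot_given B m k) set0 (@pickle_inv (seq nat) n).
have mH n : measurable (H n).
  rewrite /H; case: pickle_inv => [S|] /=; last exact: measurable0.
  exact: measurable_history_event.
have mG n : measurable (G n).
  rewrite /G; case: pickle_inv => [S|] /=; last exact: measurable0.
  exact: measurable_overshoot_given.
have PG n : (P (G n) <= (q ^+ k)%:E * P (H n))%E.
  rewrite /G /H; case: pickle_inv => [S|] /=; first exact: probability_overshoot_given.
  by rewrite !measure0 mule0.
have := measure_sigma_subadditive P mG (measurable_overshoot m k) (@subset_refl _ _).
move/le_trans; apply.
apply: le_trans (lee_nneseries (fun n _ _ => measure_ge0 P (G n)) (fun n _ => PG n)) _.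
rewrite nneseriesZl => [|n _]; last exact: measure_ge0.
rewrite -[leRHS]mule1 lee_wpmul2l ?lee_fin ?exprn_ge0 //.
have <- : P (\bigcup_n H n) = (\sum_(n <oo) P (H n))%E.
  rewrite measure_bigcup //; last exact: trivIset_history_event.
  by apply: eq_eseriesl => n; rewrite in_setT.
exact/probability_le1/bigcup_measurable.
Qed.

Lemma probability_overshoot_before n k :
  (P (\big[setU/set0]_(m < n) overshoot B m k) <= (n%:R * q ^+ k)%:E)%E.
Proof.
apply: le_trans.
  apply: (@content_subadditive _ _ _ P _ (fun m => overshoot B m k) n) => //.
  - by move=> m _; exact: measurable_overshoot.
  - by apply: bigsetU_measurable => m _; exact: measurable_overshoot.
apply: le_trans.
  apply: (@lee_sum _ _ _ (fun _ => (q ^+ k)%:E)) => m _.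
  exact: probability_overshoot.
by rewrite sumEFin sumr_const card_ord lee_fin mulr_natl.
Qed.

Lemma ae_Fvar_le (a : nat -> R) (eps : R) :
  (forall n, (0 < n)%N -> 0 < a n) -> 0 < eps ->
  (fun n => a n / ln n%:R) @ \oo --> +oo ->
  {ae P, forall w, \forall n \near \oo, Fvar (R:=R) B n w <= eps * a n}.
Proof.
move=> a0 e0 ha; set k := fun n => Num.truncn (eps * a n).
have bound : \forall n \near \oo,
    (P (\big[setU/set0]_(m < n) overshoot B m (k n)) <= (((n.+1 * n.+2)%:R)^-1)%:E)%E.
  apply: filterS (eventually_geometric_le q_ge0 q_lt1 e0 ha) => n nq.
  by apply: le_trans; first exact: probability_overshoot_before; rewrite lee_fin.
have mA n : measurable (\big[setU/set0]_(m < n) overshoot B m (k n)).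
  by apply: bigsetU_measurable => m _; exact: measurable_overshoot.
apply: filterS2 ae_unbounded_rows (ae_eventually_notin_inv mA bound) => w unb ev.
near=> n; have notA : ~ (\big[setU/set0]_(m < n) overshoot B m (k n)) w by near: n.
have an : 0 < a n by apply: a0; near: n; exact: nbhs_infty_gt.
by apply: le_trans (Fvar_le unb notA) _; rewrite truncn_le mulr_ge0 ?ltW.
Unshelve. all: by end_near.
Qed.

Lemma ae_Fvar_div_cvg0 (a : nat -> R) :
  (forall n, (0 < n)%N -> 0 < a n) ->
  (fun n => a n / ln n%:R) @ \oo --> +oo ->
  {ae P, forall w, (fun n => Fvar (R:=R) B n w / a n) @ \oo --> 0}.
Proof.
move=> a0 ha; have epos (p : nat) : 0 < p.+1%:R^-1 :> R by rewrite invr_gt0.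
have := ae_foralln (fun p => ae_Fvar_le a0 (epos p) ha).
apply: filterS2 ae_unbounded_rows => w unb Fa.
by apply: cvg_div_to0 => // n; exact: Fvar_ge0.
Qed.

End BernoulliModel.

Unset Implicit Arguments.

Theorem lemma2p2 (R : realType) (d : measure_display) (T : measurableType d)
  (P : probability T R) (q : R) (B : nat -> nat -> T -> bool) :
  0 <= q -> q < 1 ->
  (forall i j, measurable [set w | B i j w]) ->
  (forall i j, P [set w | B i j w] = (1 - q)%:E) ->
  mutually_independent_bool P (fun ij : nat * nat => B ij.1 ij.2) ->
  (forall a : nat -> R, (forall n, (0 < n)%N -> 0 < a n) ->
     (fun n => a n / ln n%:R) @ \oo --> +oo ->
     {ae P, forall w, (fun n => Fvar (R:=R) B n w / a n) @ \oo --> 0}) /\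
  {ae P, forall w, (fun n => Fvar (R:=R) B n w / n%:R) @ \oo --> 0}.
Proof.
move=> q0 q1 measB probB indepB.
have Fa := ae_Fvar_div_cvg0 q0 q1 measB probB indepB.
split=> //; apply: Fa; last exact: cvgy_n_over_ln.
by move=> n; rewrite ltr0n.
Qed.
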